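(* Let $I=[r,s]$ and let $C$ be an $I$-vertex-stable strongly connected component with $|C|\ge 2$ and $D(C)<\infty$. Let $x$ be the maximal round in $[r,s]$ with $x+D^x(C)-1\le s$. Then (i) for every $x'\in[r,x]$ it holds that $x'+D^{x'}(C)-1\le s$ and $D^{x'}(C)\le D(C)$; and (ii) $x\ge\max\{s-|C|+2,\,r\}$.
   Context: A finite set $\Pi$ of $n\ge2$ processes is given together with an infinite sequence of simple directed graphs $\mathcal{G}^1,\mathcal{G}^2,\dots$ on vertex set $\Pi$ ($\mathcal{G}^t$ is the round-$t$ communication graph). Process $p$ causally influences $q$ in round $t$ if $q=p$ or $(p\to q)\in\mathcal{G}^t$. A causal chain of length $k\ge1$ from $p$ in round $t$ to $q$ is a sequence $p=p_0,\dots,p_k=q$ with $p_i$ causally influencing $p_{i+1}$ in round $t+i$ for $0\le i<k$; the causal distance $d_t(p,q)$ is the minimum length of such a chain ($\infty$ if none). For an interval $I=[r,s]$, a set $C\subseteq\Pi$ is an $I$-vertex-stable strongly connected component if for every $p\in C$ and every round $t\in I$, the vertex set of the strongly connected component of $\mathcal{G}^t$ containing $p$ equals $C$. Its round-$x$ causal diameter is $D^x(C)=\max_{p,q\in C} d_x(p,q)$, and its causal diameter is $D(C)=\max\{D^x(C): x\in[r,s],\ x+D^x(C)-1\le s\}$ if this set is nonempty, and $D(C)=\infty$ otherwise. *)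

From Stdlib Require Import ClassicalEpsilon.
From mathcomp Require Import all_boot.
Set Implicit Arguments. Unset Strict Implicit. Unset Printing Implicit Defensive.

(* A dynamic network: round-t communication graph  G t  on the finite
   process set T (rounds are t = 1, 2, ...; G 0 is irrelevant). *)
Definition dyn_graph (T : finType) := nat -> rel T.

Section Causal.
Variables (T : finType) (G : dyn_graph T).

Definition influences (t : nat) (p q : T) : bool := (q == p) || G t p q.

Fixpoint chain (t k : nat) (p q : T) : bool :=
  match k with
  | 0 => p == q
  | k'.+1 => [exists p' : T, influences t p p' && chain t.+1 k' p' q]
  end.

(* causal distance d_t(p,q): the minimal chain length k >= 1;
   None encodes infinity *)
Definition causal_dist (t : nat) (p q : T) : option nat :=
  match excluded_middle_informative (exists k, (0 < k) && chain t k p q) with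
  | left H => Some (ex_minn H)
  | right _ => None
  end.

Definition scc (t : nat) (p : T) : {set T} :=
  [set q | connect (G t) p q && connect (G t) q p].

Definition vertex_stable (r s : nat) (C : {set T}) : Prop :=
  forall p, p \in C -> forall t, r <= t <= s -> scc t p = C.

Definition diam_at (x : nat) (C : {set T}) : option nat :=
  if [forall p in C, forall q in C, causal_dist x p q != None]
  then Some (\max_(p in C) \max_(q in C) odflt 0 (causal_dist x p q))
  else None.

(* x + D^x(C) - 1 <= s (false if D^x(C) is infinite) *)
Definition fits (s x : nat) (C : {set T}) : bool :=
  if diam_at x C is Some d then x + d <= s.+1 else false.

Definition causal_diam (r s : nat) (C : {set T}) : option nat :=
  if has (fun x => fits s x C) (index_iota r s.+1)
  then Some (\max_(r <= x < s.+1 | fits s x C) odflt 0 (diam_at x C))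
  else None.

End Causal.

(* (i) Before round x a process can simply wait, so a causal chain of
   length k from round x yields one of length x - x' + k from any earlier round
   x'; hence x' + D^x'(C) <= x + D^x(C), and x' is itself one of the rounds over
   which D(C) is a maximum.  (ii) While C is a strongly connected component, some
   edge leaves the set of processes of C already reached from p, so each round
   reaches at least one new process; after |C| - 1 rounds ending in round s all
   of C is reached, so round s - |C| + 2 fits and is at most x. *)

From mathcomp Require Import all_boot.
From mathcomp Require Import zify.
Set Implicit Arguments. Unset Strict Implicit.

Lemma connect_exit (T : finType) (e : rel T) (S : {set T}) a b :
  connect e a b -> a \in S -> b \notin S ->
  exists u v, [/\ u \in S, v \notin S, e u v, connect e a v & connect e v b].
Proof.
case/connectP => s; elim: s a => [|y s IH] a /=; first by move=> _ -> ->.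
case/andP => eay py bE aS bS; case: (boolP (y \in S)) => yS.
  have [u [v [uS vS euv cyv cvb]]] := IH y py bE yS bS.
  by exists u, v; split => //; apply: connect_trans cyv; apply: connect1.
exists a, y; split => //; first exact: connect1.
by apply/connectP; exists s.
Qed.

Section CausalChains.
Variables (T : finType) (G : dyn_graph T).

Lemma chain_refl k t (p : T) : chain G t k p p.
Proof.
elim: k t => [|k IH] t //=.
by apply/existsP; exists p; rewrite IH andbT /influences eqxx.
Qed.

Lemma chain_cat a b t (p m q : T) :
  chain G t a p m -> chain G (t + a) b m q -> chain G t (a + b) p q.
Proof.
elim: a t p => [|a IH] t p /=; first by move/eqP=> ->; rewrite addn0.
case/existsP => p' /andP[pp' p'm] mq; apply/existsP; exists p'.
by rewrite pp' (IH _ _ p'm) // addSnnS.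
Qed.

Lemma chain_idle_head t' t k (p q : T) :
  t' <= t -> chain G t k p q -> chain G t' (t - t' + k) p q.
Proof. by move=> le_t't pq; apply: (chain_cat (chain_refl _ _ _)); rewrite subnKC. Qed.

Lemma chain_succ k t (p q : T) : chain G t k p q -> chain G t k.+1 p q.
Proof. by move=> pq; rewrite -addn1; apply: (chain_cat pq); apply: chain_refl. Qed.

Lemma chain_step k t (p u v : T) :
  chain G t k p u -> G (t + k) u v -> chain G t k.+1 p v.
Proof.
move=> pu uv; rewrite -addn1; apply: (chain_cat pu) => /=.
by apply/existsP; exists v; rewrite /influences uv orbT eqxx.
Qed.

Lemma causal_dist_chain t (p q : T) m :
  causal_dist G t p q = Some m -> 0 < m /\ chain G t m p q.
Proof.
rewrite /causal_dist; case: ClassicalEpsilon.excluded_middle_informative => // ex.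
by case: ex_minnP => m' /andP[m'_gt0 pq] _ [<-].
Qed.

Lemma causal_dist_le t k (p q : T) :
  0 < k -> chain G t k p q -> exists2 m, causal_dist G t p q = Some m & m <= k.
Proof.
move=> k_gt0 pq; rewrite /causal_dist.
case: ClassicalEpsilon.excluded_middle_informative => [ex|]; last by case; exists k; rewrite k_gt0.
by case: ex_minnP => m _ min_m; exists m => //; apply: min_m; rewrite k_gt0.
Qed.

Lemma diam_at_chain t (C : {set T}) d : diam_at G t C = Some d ->
  forall p q, p \in C -> q \in C -> exists2 k, 0 < k <= d & chain G t k p q.
Proof.
rewrite /diam_at; case: ifP => // /forall_inP all_fin [<-] p q pC qC.
move: (all_fin p pC) => /forall_inP/(_ q qC).
case Epq: (causal_dist G t p q) => [m|] // _.
have [m_gt0 pq] := causal_dist_chain Epq.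
exists m => //; rewrite m_gt0 /=.
apply: leq_trans (leq_bigmax_cond _ pC); apply: leq_trans (leq_bigmax_cond _ qC).
by rewrite Epq.
Qed.

Lemma diam_at_le t (C : {set T}) B :
  (forall p q, p \in C -> q \in C -> exists2 k, 0 < k <= B & chain G t k p q) ->
  exists2 d, diam_at G t C = Some d & d <= B.
Proof.
move=> short; rewrite /diam_at.
have dist_le p q : p \in C -> q \in C ->
    exists2 m, causal_dist G t p q = Some m & m <= B.
  move=> pC qC; have [k /andP[k_gt0 le_kB] pq] := short p q pC qC.
  by have [m -> le_mk] := causal_dist_le k_gt0 pq; exists m; rewrite ?(leq_trans le_mk).
have -> : [forall p in C, forall q in C, causal_dist G t p q != None].
  by apply/forall_inP => p pC; apply/forall_inP => q qC; have [m ->] := dist_le p q pC qC.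
exists (\max_(p in C) \max_(q in C) odflt 0 (causal_dist G t p q)) => //.
by apply/bigmax_leqP => p pC; apply/bigmax_leqP => q qC; have [m ->] := dist_le p q pC qC.
Qed.

Lemma diam_at_earlier t' t (C : {set T}) d : t' <= t ->
  diam_at G t C = Some d -> exists2 d', diam_at G t' C = Some d' & d' <= t - t' + d.
Proof.
move=> le_t't /diam_at_chain short; apply: diam_at_le => p q pC qC.
have [k /andP[k_gt0 le_kd] pq] := short p q pC qC.
by exists (t - t' + k); [lia | apply: chain_idle_head].
Qed.

Lemma causal_diam_max r s (C : {set T}) d x dx :
  causal_diam G r s C = Some d -> r <= x <= s -> fits G s x C ->
  diam_at G x C = Some dx -> dx <= d.
Proof.
rewrite /causal_diam; case: ifP => // _ [<-] x_in fit_x Edx.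
rewrite big_mkcond /=.
apply: leq_trans (leq_bigmax_seq (P := xpredT) (F := fun i =>
  if fits G s i C then odflt 0 (diam_at G i C) else 0) x _ _) => //.
- by rewrite fit_x Edx.
- by rewrite mem_index_iota ltnS.
Qed.

Section StableComponent.
Variables (r s : nat) (C : {set T}).
Hypothesis stable_C : vertex_stable G r s C.

Lemma stable_reach_card y k p : p \in C -> r <= y -> y + k <= s.+1 ->
  minn k.+1 #|C| <= #|[set q in C | chain G y k p q]|.
Proof.
move=> pC le_ry; elim: k => [|k IH] le_yks.
  rewrite geq_min; apply/orP; left; rewrite card_gt0.
  by apply/set0Pn; exists p; rewrite inE pC chain_refl.
set S := [set q in C | chain G y k p q] in IH.
set S' := [set q in C | chain G y k.+1 p q].
have sub_SS' : S \subset S'.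
  by apply/subsetP => q; rewrite !inE => /andP[-> /chain_succ].
have [sub_CS | /subsetPn[q qC qNS]] := boolP (C \subset S).
  by rewrite geq_min (subset_leq_card (subset_trans sub_CS sub_SS')) orbT.
have scc_p : scc G (y + k) p = C by apply: stable_C => //; lia.
have pS : p \in S by rewrite inE pC chain_refl.
have /andP[pq qp] : connect (G (y + k)) p q && connect (G (y + k)) q p.
  by move: qC; rewrite -scc_p inE.
have [u [v [uS vNS uv pv vq]]] := connect_exit pq pS qNS.
have vS' : v \in S'.
  rewrite !inE -scc_p inE pv (connect_trans vq qp) /=.
  by move: uS; rewrite inE => /andP[_ /chain_step]; apply.
have ltSS' : #|S| < #|S'| by apply/proper_card/properP; split=> //; exists v.
have le_yk : y + k <= s.+1 by rewrite ltnW // -addnS.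
move: (IH le_yk) ltSS'; move: #|C| #|S| #|S'|; clear; lia.
Qed.

Lemma stable_chain_all y k p q : #|C| <= k.+1 -> r <= y -> y + k <= s.+1 ->
  p \in C -> q \in C -> chain G y k p q.
Proof.
move=> le_Ck le_ry le_yks pC qC.
have reach_C : [set q in C | chain G y k p q] = C.
  apply/eqP; rewrite eqEcard; apply/andP; split.
    by apply/subsetP => z; rewrite inE => /andP[].
  by have := stable_reach_card pC le_ry le_yks; rewrite (minn_idPr le_Ck).
by move: qC; rewrite -reach_C inE => /andP[].
Qed.

Lemma stable_diam_at_le y k : 0 < k -> #|C| <= k.+1 -> r <= y -> y + k <= s.+1 ->
  exists2 d, diam_at G y C = Some d & d <= k.
Proof.
move=> k_gt0 le_Ck le_ry le_yks; apply: diam_at_le => p q pC qC.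
by exists k; rewrite ?k_gt0 ?leqnn //; apply: stable_chain_all.
Qed.

End StableComponent.

End CausalChains.

Theorem lemma3 (T : finType) (G : dyn_graph T) (r s : nat) (C : {set T})
  (x : nat) (d : nat) :
  2 <= #|T| ->
  (forall t, irreflexive (G t)) ->
  1 <= r ->
  vertex_stable G r s C ->
  2 <= #|C| ->
  causal_diam G r s C = Some d ->
  (* x is the maximal round in [r,s] with x + D^x(C) - 1 <= s *)
  r <= x <= s -> fits G s x C ->
  (forall y, r <= y <= s -> fits G s y C -> y <= x) ->
  (forall x', r <= x' <= x ->
     exists d', diam_at G x' C = Some d' /\ x' + d' <= s.+1 /\ d' <= d)
  /\ maxn (s + 2 - #|C|) r <= x.
Proof.
move=> _ _ _ stable_C C_ge2 Dd /andP[le_rx le_xs] fit_x x_max; split.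
  move=> x' /andP[le_rx' le_x'x].
  move: fit_x; rewrite /fits; case Edx: (diam_at G x C) => [dx|] // fit_x.
  have [d' Ed' le_d'] := diam_at_earlier le_x'x Edx.
  have le_x'd' : x' + d' <= s.+1 by lia.
  have fits_x' : fits G s x' C by rewrite /fits Ed'.
  exists d'; split=> //; split=> //.
  by apply: causal_diam_max Dd _ fits_x' Ed'; lia.
rewrite geq_max le_rx andbT.
case: (leqP (s + 2 - #|C|) r) => [le_yr|lt_ry]; first exact: leq_trans le_yr le_rx.
have [dy Edy le_dy] := stable_diam_at_le stable_C (y := s + 2 - #|C|)
  (k := #|C|.-1) ltac:(lia) ltac:(lia) ltac:(lia) ltac:(lia).
by apply: x_max; [lia | rewrite /fits Edy; lia].
Qed.
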